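(* (a) There exist compatible t-pairs $\tau_1^1,\tau_2^1$ and a union $\tau^1$ of them such that $\operatorname{typ}_u(\tau_1^1)=\operatorname{typ}_u(\tau_2^1)=\operatorname{typ}_u(\tau^1)=t_5$. (b) There exist compatible t-pairs $\tau_1^2,\tau_2^2$ and a union $\tau^2$ of them such that $\operatorname{typ}_u(\tau_1^2)=\operatorname{typ}_u(\tau_2^2)=t_5$ and $\operatorname{typ}_u(\tau^2)=t_6$.
   Context: Let $\mathbb{N}=\{0,1,2,\dots\}$; for an integer $k\ge 2$ let $E_k=\{0,1,\dots,k-1\}$; let $\mathcal{P}(\mathbb{N})$ be the set of nonempty finite subsets of $\mathbb{N}$. Let $F$ be a nonempty set (of attribute names). A decision table $T\in\mathcal{M}_k(F)$ is a rectangular table with $n\ge 1$ columns labeled with attributes $f_1,\dots,f_n\in F$ (any two columns labeled with the same attribute are equal), whose rows are pairwise different tuples from $E_k^n$ (the set of rows may be empty), each row being labeled with a set of decisions from $\mathcal{P}(\mathbb{N})$. Write $At(T)=\{f_1,\dots,f_n\}$ and $\Delta(T)$ for the set of rows. For a word $\alpha=(f_{i_1},\delta_1)\cdots(f_{i_m},\delta_m)$ with $f_{i_j}\in At(T)$, $\delta_j\in E_k$, the subtable $T\alpha$ consists of the rows of $T$ having value $\delta_j$ in column $f_{i_j}$ for all $j$ ($T\lambda=T$ for the empty word $\lambda$). Operations on tables: (1) removal of a column from a table with at least two columns (if groups of equal rows appear, only the first row of each group, with its decision set, is kept); (2) changing of decisions: the decision sets attached to rows are replaced arbitrarily by sets from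 $\mathcal{P}(\mathbb{N})$; (3) permutation of columns: swap two columns together with their attribute labels; (4) duplication of columns: add a copy of a column (with its label) next to it. A set $\mathcal{C}\subseteq\mathcal{M}_k(F)$ is a closed class if every table obtained from a table of $\mathcal{C}$ by finitely many such operations belongs to $\mathcal{C}$. A decision tree over $\mathcal{M}_k(F)$ is a finite directed tree with a root (unique node with no entering edge) and at least two nodes such that the root and the edges leaving the root are unlabeled, each worker node (neither root nor terminal) is labeled with an attribute from $F$, each edge leaving a worker node is labeled with a number from $E_k$, and each terminal node is labeled with a number from $\mathbb{N}$. For a complete path $\xi$ (root to terminal node) whose worker nodes are labeled $f_{j_1},\dots,f_{j_m}$ in order, with the edges leaving them labeled $\delta_1,\dots,\delta_m$, put $\pi(\xi)=(f_{j_1},\delta_1)\cdots(f_{j_m},\delta_m)$, $\varphi(\xi)=f_{j_1}\cdots f_{j_m}$ (both empty if $m=0$), and let $\tau(\xi)$ be the label of its terminal node. A nondeterministic decision tree for $T$ is a decision tree $\Gamma$ whose worker-node attributes lie in $At(T)$, such that $\bigcup_{\xi}\Delta(T\pi(\xi))=\Delta(T)$ (union over complete paths), and for every row $r\in\Delta(T)$ and every complete path $\xi$ with $r\in\Delta(T\pi(\xi))$, $\tau(\xi)$ belongs to the decision set of $r$. A decision tree is deterministic if exactly one edge leaves the root and the edges leaving each worker node have pairwise different labels; a deterministic decision tree for $T$ is a deterministic decision tree that is a nondeterministic decision tree for $T$. A complexity measure over $\mathcal{M}_k(F)$ is any map $\psi:F^*\to\mathbb{N}$, where $F^*$ is the set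 of finite words over $F$ including the empty word $\lambda$. For a tree, $\psi(\Gamma)=\max_\xi\psi(\varphi(\xi))$ over complete paths. For $T$ with columns labeled $f_1,\dots,f_n$: $\psi^i(T)=\psi(f_1\cdots f_n)$, $\psi^d(T)$ is the minimum complexity of a deterministic decision tree for $T$, $\psi^a(T)$ the minimum complexity of a nondeterministic decision tree for $T$. A t-pair $(\mathcal{C},\psi)$ consists of a closed class $\mathcal{C}\subseteq\mathcal{M}_k(F)$ and a complexity measure $\psi$ over $\mathcal{M}_k(F)$. For $b,c\in\{i,d,a\}$ define the partial function $\mathcal{U}^{bc}_{\mathcal{C}\psi}(n)=\max\{\psi^b(T):T\in\mathcal{C},\psi^c(T)\le n\}$ (defined iff this set is nonempty and finite). For a partial function $g:\mathbb{N}\to\mathbb{N}$ with domain $\mathrm{Dom}(g)$, let $\mathrm{Dom}^+(g)=\{n\in\mathrm{Dom}(g):g(n)\ge n\}$, $\mathrm{Dom}^-(g)=\{n\in\mathrm{Dom}(g):g(n)\le n\}$. Its type $\operatorname{typ}(g)$ is: $\alpha$ if $\mathrm{Dom}(g)$ is infinite and $g$ is bounded above; $\beta$ if $\mathrm{Dom}(g)$ is infinite, $\mathrm{Dom}^+(g)$ is finite and $g$ is unbounded above; $\gamma$ if $\mathrm{Dom}^+(g)$ and $\mathrm{Dom}^-(g)$ are both infinite; $\delta$ if $\mathrm{Dom}(g)$ is infinite and $\mathrm{Dom}^-(g)$ is finite; $\epsilon$ if $\mathrm{Dom}(g)$ is finite. The upper type $\operatorname{typ}_u(\mathcal{C},\psi)$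 is the $3\times 3$ table with rows and columns indexed by $i,d,a$ (in this order) whose entry in row $b$, column $c$ is $\operatorname{typ}(\mathcal{U}^{bc}_{\mathcal{C}\psi})$. Row by row (rows $i,d,a$; entries in columns $i,d,a$): $t_5$: $i:(\gamma,\epsilon,\epsilon)$; $d:(\gamma,\gamma,\gamma)$; $a:(\gamma,\gamma,\gamma)$. $t_6$: $i:(\gamma,\epsilon,\epsilon)$; $d:(\gamma,\gamma,\delta)$; $a:(\gamma,\gamma,\gamma)$. Union: t-pairs $\tau_1=(\mathcal{C}_1,\psi_1)$ with $\mathcal{C}_1\subseteq\mathcal{M}_{k_1}(F_1)$ and $\tau_2=(\mathcal{C}_2,\psi_2)$ with $\mathcal{C}_2\subseteq\mathcal{M}_{k_2}(F_2)$ are compatible if $F_1\cap F_2=\varnothing$ and $\psi_1(\lambda)=\psi_2(\lambda)$. A union of them is a t-pair $(\mathcal{C},\psi)$ with $\mathcal{C}=\mathcal{C}_1\cup\mathcal{C}_2\subseteq\mathcal{M}_{\max(k_1,k_2)}(F_1\cup F_2)$ and $\psi:(F_1\cup F_2)^*\to\mathbb{N}$ any map with $\psi(\alpha)=\psi_1(\alpha)$ for $\alpha\in F_1^*$, $\psi(\alpha)=\psi_2(\alpha)$ for $\alpha\in F_2^*$, and arbitrary values on words containing letters from both $F_1$ and $F_2$. *)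

From Stdlib Require List.
From HB Require Import structures.
From mathcomp Require Import all_boot finmap.
Set Implicit Arguments. Unset Strict Implicit. Unset Printing Implicit Defensive.

Local Open Scope fset_scope.

Section Tables.
Variable A : Type.

(* A decision table: the list of column labels f_1..f_n and the list of
   rows (in order); each row is a tuple of values together with its
   (finite) decision set. *)
Record table := Table { cols : seq A ; rows : seq (seq nat * {fset nat}) }.

Definition in_M (k : nat) (F : A -> Prop) (T : table) : Prop :=
  0 < size (cols T) /\
  (forall f, List.In f (cols T) -> F f) /\
  (forall r, r \in rows T -> size r.1 = size (cols T) /\ all (fun x => x < k) r.1) /\
  uniq (map fst (rows T)) /\
  (forall r, r \in rows T -> r.2 != fset0) /\
  (forall i j f, List.nth_error (cols T) i = Some f ->
     List.nth_error (cols T) j = Some f ->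
     forall r, r \in rows T -> nth 0 r.1 i = nth 0 r.1 j).

Definition rem_at (X : Type) (i : nat) (s : seq X) : seq X := take i s ++ drop i.+1 s.
Definition dup_at (X : Type) (i : nat) (s : seq X) : seq X := take i.+1 s ++ drop i s.
Definition swap_seq (X : Type) (i j : nat) (s : seq X) : seq X :=
  pmap (fun m => List.nth_error s (if m == i then j else if m == j then i else m))
       (iota 0 (size s)).

Fixpoint dedup_acc (seen : seq (seq nat)) (s : seq (seq nat * {fset nat}))
  : seq (seq nat * {fset nat}) :=
  match s with
  | [::] => [::]
  | r :: s' => if r.1 \in seen then dedup_acc seen s' else r :: dedup_acc (r.1 :: seen) s'
  end.

Inductive op_step (T : table) : table -> Prop :=
| OpRemove i : 1 < size (cols T) -> i < size (cols T) ->
    op_step T (Table (rem_at i (cols T))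
                     (dedup_acc [::] [seq (rem_at i r.1, r.2) | r <- rows T]))
| OpChange rs : map fst rs = map fst (rows T) -> (forall r, r \in rs -> r.2 != fset0) ->
    op_step T (Table (cols T) rs)
| OpSwap i j : i < size (cols T) -> j < size (cols T) ->
    op_step T (Table (swap_seq i j (cols T)) [seq (swap_seq i j r.1, r.2) | r <- rows T])
| OpDup i : i < size (cols T) ->
    op_step T (Table (dup_at i (cols T)) [seq (dup_at i r.1, r.2) | r <- rows T]).

Inductive op_star (T : table) : table -> Prop :=
| OpRefl : op_star T T
| OpStep T1 T2 : op_star T T1 -> op_step T1 T2 -> op_star T T2.

Definition closed_class (k : nat) (F : A -> Prop) (C : table -> Prop) : Prop :=
  (forall T, C T -> in_M k F T) /\ (forall T T', C T -> op_star T T' -> C T').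

(* A decision tree
   is the list of subtrees hanging from the (unlabelled) root. *)
Inductive node := Term of nat | Work of A & seq (nat * node).

Inductive wf_node (k : nat) (P : A -> Prop) : node -> Prop :=
| WfTerm d : wf_node k P (Term d)
| WfWork f ch : P f -> ch <> [::] ->
    (forall e t, List.In (e, t) ch -> e < k /\ wf_node k P t) -> wf_node k P (Work f ch).

Inductive det_node : node -> Prop :=
| DTerm d : det_node (Term d)
| DWork f ch : uniq (map fst ch) -> (forall e t, List.In (e, t) ch -> det_node t) ->
    det_node (Work f ch).

Definition det_tree (G : seq node) : Prop :=
  size G = 1 /\ forall t, List.In t G -> det_node t.

Inductive npath : node -> seq (A * nat) -> nat -> Prop :=
| NPTerm d : npath (Term d) [::] d
| NPWork f ch e t w d : List.In (e, t) ch -> npath t w d ->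
    npath (Work f ch) ((f, e) :: w) d.

Definition tpath (G : seq node) (w : seq (A * nat)) (d : nat) : Prop :=
  exists t, List.In t G /\ npath t w d.

Definition sat (T : table) (v : seq nat) (w : seq (A * nat)) : Prop :=
  forall p, List.In p w ->
    exists i, List.nth_error (cols T) i = Some p.1 /\ nth 0 v i = p.2.

Definition ndtree_for (k : nat) (T : table) (G : seq node) : Prop :=
  G <> [::] /\
  (forall t, List.In t G -> wf_node k (fun f => List.In f (cols T)) t) /\
  (forall r, r \in rows T -> exists w d, tpath G w d /\ sat T r.1 w) /\
  (forall r w d, r \in rows T -> tpath G w d -> sat T r.1 w -> d \in r.2).

Definition dtree_for (k : nat) (T : table) (G : seq node) : Prop :=
  ndtree_for k T G /\ det_tree G.

Definition tree_cplx (psi : seq A -> nat) (G : seq node) (m : nat) : Prop :=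
  (exists w d, tpath G w d /\ psi (map fst w) = m) /\
  (forall w d, tpath G w d -> psi (map fst w) <= m).

Definition psi_d (k : nat) (psi : seq A -> nat) (T : table) (m : nat) : Prop :=
  (exists G, dtree_for k T G /\ tree_cplx psi G m) /\
  (forall G m', dtree_for k T G -> tree_cplx psi G m' -> m <= m').

Definition psi_a (k : nat) (psi : seq A -> nat) (T : table) (m : nat) : Prop :=
  (exists G, ndtree_for k T G /\ tree_cplx psi G m) /\
  (forall G m', ndtree_for k T G -> tree_cplx psi G m' -> m <= m').

End Tables.

Inductive cm := MI | MD | MA.

Definition cplx (A : Type) (k : nat) (psi : seq A -> nat) (b : cm) (T : table A) (m : nat)
  : Prop :=
  match b with
  | MI => psi (cols T) = m
  | MD => psi_d k psi T m
  | MA => psi_a k psi T m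
  end.

Definition Uset (A : Type) (k : nat) (C : table A -> Prop) (psi : seq A -> nat)
  (b c : cm) (n m : nat) : Prop :=
  exists T, C T /\ cplx k psi b T m /\ exists m', cplx k psi c T m' /\ m' <= n.

(* graph of the partial function U^{bc}: U n v iff the set is nonempty,
   finite and its maximum is v *)
Definition U (A : Type) (k : nat) (C : table A -> Prop) (psi : seq A -> nat)
  (b c : cm) (n v : nat) : Prop :=
  Uset k C psi b c n v /\ forall m, Uset k C psi b c n m -> m <= v.

Inductive typ := TAlpha | TBeta | TGamma | TDelta | TEps.

Definition inf_set (P : nat -> Prop) : Prop := forall N, exists n, N <= n /\ P n.
Definition fin_set (P : nat -> Prop) : Prop := exists N, forall n, P n -> n < N.

Definition Dom (g : nat -> nat -> Prop) (n : nat) : Prop := exists v, g n v.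
Definition Domp (g : nat -> nat -> Prop) (n : nat) : Prop := exists v, g n v /\ n <= v.
Definition Domm (g : nat -> nat -> Prop) (n : nat) : Prop := exists v, g n v /\ v <= n.
Definition bounded_above (g : nat -> nat -> Prop) : Prop :=
  exists B, forall n v, g n v -> v <= B.

Definition has_typ (g : nat -> nat -> Prop) (t : typ) : Prop :=
  match t with
  | TAlpha => inf_set (Dom g) /\ bounded_above g
  | TBeta => inf_set (Dom g) /\ fin_set (Domp g) /\ ~ bounded_above g
  | TGamma => inf_set (Domp g) /\ inf_set (Domm g)
  | TDelta => inf_set (Dom g) /\ fin_set (Domm g)
  | TEps => fin_set (Dom g)
  end.

Definition typ_u_is (A : Type) (k : nat) (C : table A -> Prop) (psi : seq A -> nat)
  (t : cm -> cm -> typ) : Prop :=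
  forall b c, has_typ (U k C psi b c) (t b c).

Definition t5 (b c : cm) : typ :=
  match b, c with
  | MI, MI => TGamma | MI, _ => TEps
  | _, _ => TGamma
  end.

Definition t6 (b c : cm) : typ :=
  match b, c with
  | MI, MI => TGamma | MI, _ => TEps
  | MD, MA => TDelta
  | _, _ => TGamma
  end.

Definition tpair (A : Type) (k : nat) (F : A -> Prop) (C : table A -> Prop)
  (psi : seq A -> nat) : Prop :=
  2 <= k /\ (exists f, F f) /\ closed_class k F C.

Definition compatible (A : Type) (F1 F2 : A -> Prop) (psi1 psi2 : seq A -> nat) : Prop :=
  (forall f, F1 f -> F2 f -> False) /\ psi1 [::] = psi2 [::].

Definition word_over (A : Type) (F : A -> Prop) (w : seq A) : Prop :=
  forall f, List.In f w -> F f.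

Definition is_union (A : Type)
  (k1 : nat) (F1 : A -> Prop) (C1 : table A -> Prop) (psi1 : seq A -> nat)
  (k2 : nat) (F2 : A -> Prop) (C2 : table A -> Prop) (psi2 : seq A -> nat)
  (C : table A -> Prop) (psi : seq A -> nat) : Prop :=
  tpair (maxn k1 k2) (fun f => F1 f \/ F2 f) C psi /\
  (forall T, C T <-> C1 T \/ C2 T) /\
  (forall w, word_over F1 w -> psi w = psi1 w) /\
  (forall w, word_over F2 w -> psi w = psi2 w).

From mathcomp Require Import all_boot finmap.
From Stdlib Require Import Classical.
From mathcomp Require Import zify.
Set Implicit Arguments. Unset Strict Implicit. Unset Printing Implicit Defensive.

(* Attributes are pairs (n, j), read as column j of block n.  Let C_S = [block_class S]
   consist of the tables with 0/1 entries whose columns all lie in a single block n of S,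
   and let psi charge a word 0 if it is empty, n if it is a single letter of block n, and
   n + 1 if it is longer.  On a table of block n the complexities psi^d and psi^a thus lie
   in {0, n, n + 1}; they are bounded by psi^i, which is n or n + 1 according as the table
   has one column or more; psi^a <= psi^d; and psi^a = 0 forces psi^d = 0 when n > 0.  The
   one-row table, the one-column table with two rows and the 3 x 3 identity table realise
   (psi^i, psi^d, psi^a) = (n, 0, 0), (n, n, n) and (n + 1, n + 1, n).  Hence, for an
   infinite S not containing 0, typ_u(C_S, psi) agrees with t5 except possibly at U^{da},
   which is m + 1 at m in S and at most m elsewhere: its type is gamma when S has an
   infinite complement and delta when S contains every positive integer.  Splitting
   {4k > 0} u {4k + 2} keeps the complement infinite, which gives (a); splitting the
   positive evens u the odds gives (b). *)

Lemma InP (T : eqType) {x : T} {s : seq T} : reflect (List.In x s) (x \in s).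
Proof.
elim: s => [|y s IH] /=; first by right.
rewrite in_cons; apply: (iffP orP) => [[/eqP ->|/IH]|[->|/IH]]; auto.
Qed.

Lemma nth_error_size (T : Type) (s : seq T) i x :
  List.nth_error s i = Some x -> i < size s.
Proof. by elim: s i => [|y s IH] [|i] //= /IH. Qed.

Lemma nth_map_nth_error (T U : Type) (u0 : U) (a : T -> U) s i x :
  List.nth_error s i = Some x -> nth u0 (map a s) i = a x.
Proof. by elim: s i => [|y s IH] [|i] //=; [case=> -> | exact: IH]. Qed.

Lemma nth_error_map (T U : Type) (a : T -> U) s i :
  List.nth_error (map a s) i = omap a (List.nth_error s i).
Proof. by elim: s i => [|y s IH] [|i] //=. Qed.

Lemma map_rem_at (T U : Type) (a : T -> U) i s : rem_at i (map a s) = map a (rem_at i s).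
Proof. by rewrite /rem_at map_cat map_take map_drop. Qed.

Lemma map_dup_at (T U : Type) (a : T -> U) i s : dup_at i (map a s) = map a (dup_at i s).
Proof. by rewrite /dup_at map_cat map_take map_drop. Qed.

Lemma map_swap_seq (T U : Type) (a : T -> U) i j s :
  swap_seq i j (map a s) = map a (swap_seq i j s).
Proof.
rewrite /swap_seq size_map.
elim: (iota 0 (size s)) => //= m l ->.
by rewrite nth_error_map; case: (List.nth_error s _).
Qed.

Lemma mem_rem_at (T : eqType) i (s : seq T) : {subset rem_at i s <= s}.
Proof. by move=> x; rewrite mem_cat => /orP [/mem_take|/mem_drop]. Qed.

Lemma mem_dup_at (T : eqType) i (s : seq T) : dup_at i s =i s.
Proof.
move=> x; apply/idP/idP; first by rewrite mem_cat => /orP [/mem_take|/mem_drop].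
rewrite -{1}(cat_take_drop i.+1 s) !mem_cat => /orP [->//|x_drop].
by rewrite -add1n -drop_drop in x_drop; rewrite (mem_drop x_drop) orbT.
Qed.

Lemma uniq_map_inj_in (T U : eqType) (f : T -> U) (s : seq T) :
  uniq (map f s) -> {in s &, injective f}.
Proof.
elim: s => [//|a s IH] /= /andP [fa_notin /IH inj_s] x y.
rewrite !in_cons => /predU1P [->|xs] /predU1P [->|ys] // Efxy.
- by move: fa_notin; rewrite Efxy map_f.
- by move: fa_notin; rewrite -Efxy map_f.
- exact: inj_s.
Qed.

Lemma swap_index_involutive (i j m : nat) :
  let sw p := if p == i then j else if p == j then i else p in sw (sw m) = m.
Proof. by rewrite /=; do !case: eqP => //=; lia. Qed.

Lemma mem_swap_seq (T : eqType) i j (s : seq T) :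
  i < size s -> j < size s -> swap_seq i j s =i s.
Proof.
move=> i_lt j_lt x; rewrite /swap_seq mem_pmap; apply/idP/idP.
  by case/mapP=> m _ /esym s_m; apply/InP; exact: List.nth_error_In s_m.
move/InP=> xs; have [p s_p] := List.In_nth_error _ _ xs; have p_lt := nth_error_size s_p.
apply/mapP; exists (if p == i then j else if p == j then i else p).
  by rewrite mem_iota add0n; case: ifP => //; case: ifP.
by rewrite (swap_index_involutive i j p).
Qed.

Section BinaryTables.
Variable A : eqType.
Implicit Types (T : table A) (s : seq (seq nat * {fset nat})).

(* Rows are restrictions of a 0/1 assignment to the attributes, so that equally
   labelled columns agree. *)
Definition boolean_row (cs : seq A) (v : seq nat) : Prop :=
  exists2 a : A -> nat, (forall f, a f <= 1) & v = map a cs.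

Definition binary_table T : Prop :=
  [/\ 0 < size (cols T), {in rows T, forall r, boolean_row (cols T) r.1},
      uniq (map fst (rows T)) & {in rows T, forall r, r.2 != fset0}].

Lemma boolean_row_le1 cs v i : boolean_row cs v -> nth 0 v i <= 1.
Proof. by case=> a a_le1 ->; elim: cs i => [|c cs IH] [|i] //=; rewrite ?nth_nil. Qed.

Lemma binary_table_in_M (F : A -> Prop) T :
  {in cols T, forall f, F f} -> binary_table T -> in_M 2 F T.
Proof.
move=> FT [cols_gt0 rows_bool rows_uniq dec_nonempty].
split=> //; split; first by move=> f /InP /FT.
split.
  move=> r /rows_bool [a a_le1 ->]; rewrite size_map; split=> //.
  by apply/allP=> _ /mapP [f _ ->]; rewrite ltnS.
do 2!split=> //.
move=> i j f i_f j_f r /rows_bool [a _ ->].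
by rewrite (nth_map_nth_error _ _ i_f) (nth_map_nth_error _ _ j_f).
Qed.

Lemma mem_dedup_acc seen s : {subset dedup_acc seen s <= s}.
Proof.
elim: s seen => [|r s IH] seen x //=; rewrite in_cons.
by case: ifP => _; [move/IH -> | case/predU1P => [->|/IH ->]]; rewrite ?eqxx ?orbT.
Qed.

Lemma dedup_acc_uniq seen s :
  uniq (map fst (dedup_acc seen s)) /\ {in map fst (dedup_acc seen s), forall v, v \notin seen}.
Proof.
elim: s seen => [|r s IH] seen //=.
case: ifP => r_seen; first exact: IH.
have [uniq_s fresh_s] := IH (r.1 :: seen).
split; first by rewrite /= uniq_s andbT; apply/negP => /fresh_s; rewrite mem_head.
move=> v; rewrite in_cons => /predU1P [->|/fresh_s]; first by rewrite r_seen.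
by rewrite in_cons negb_or => /andP [].
Qed.

Lemma binary_table_rem_col T i : 1 < size (cols T) -> i < size (cols T) -> binary_table T ->
  binary_table (Table (rem_at i (cols T))
                      (dedup_acc [::] [seq (rem_at i r.1, r.2) | r <- rows T])).
Proof.
move=> cols_gt1 i_lt [_ rows_bool _ dec_nonempty]; split=> /=.
- by rewrite size_cat size_take size_drop i_lt; lia.
- move=> _ /mem_dedup_acc /mapP [r /rows_bool [a a_le1 Er] ->].
  by exists a; rewrite //= Er map_rem_at.
- by case: (dedup_acc_uniq [::] [seq (rem_at i r.1, r.2) | r <- rows T]).
- by move=> _ /mem_dedup_acc /mapP [r /dec_nonempty ? ->].
Qed.

Lemma binary_table_change_dec T rs :
  map fst rs = map fst (rows T) -> {in rs, forall r, r.2 != fset0} ->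
  binary_table T -> binary_table (Table (cols T) rs).
Proof.
move=> Ers rs_nonempty [cols_gt0 rows_bool rows_uniq _]; split; rewrite /= ?Ers //.
by move=> r /(map_f fst); rewrite Ers => /mapP [r0 /rows_bool ? ->].
Qed.

Lemma binary_table_reshape T (g : forall X : Type, seq X -> seq X) :
  (forall (X Y : Type) (h : X -> Y) (s : seq X), g Y (map h s) = map h (g X s)) ->
  {subset cols T <= g A (cols T)} -> binary_table T ->
  binary_table (Table (g A (cols T)) [seq (g nat r.1, r.2) | r <- rows T]).
Proof.
move=> g_map cols_sub [cols_gt0 rows_bool rows_uniq dec_nonempty]; split=> /=.
- case: (cols T) cols_gt0 cols_sub => [//|c cs] _ /(_ c (mem_head c cs)).
  by case: (g A _).
- by move=> _ /mapP [r /rows_bool [a a_le1 ->] ->]; exists a; rewrite //= g_map.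
- rewrite -map_comp (map_comp (g nat) fst) map_inj_in_uniq //.
  move=> _ _ /mapP [x /rows_bool [a _ ->] ->] /mapP [y /rows_bool [b _ ->] ->].
  rewrite !g_map => /eq_in_map ab_eq; apply/eq_in_map => f /cols_sub; exact: ab_eq.
- by move=> _ /mapP [r /dec_nonempty ? ->].
Qed.

Lemma binary_table_step T T' : op_step T T' -> binary_table T -> binary_table T'.
Proof.
case=> [i|rs|i j|i] => [||i_lt j_lt|i_lt].
- exact: binary_table_rem_col.
- exact: binary_table_change_dec.
- apply: (binary_table_reshape (g := fun X => @swap_seq X i j)) => [X Y h s|f].
    exact: map_swap_seq.
  by rewrite mem_swap_seq.
- apply: (binary_table_reshape (g := fun X => @dup_at X i)) => [X Y h s|f].
    exact: map_dup_at.
  by rewrite mem_dup_at.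
Qed.

Lemma cols_step_sub T T' : op_step T T' -> {subset cols T' <= cols T}.
Proof.
case=> [i _ _ f /mem_rem_at //|rs _ _ //|i j i_lt j_lt f|i _ f] /=.
  by rewrite mem_swap_seq.
by rewrite mem_dup_at.
Qed.

End BinaryTables.

Section DecisionTrees.
Variables (A : eqType) (k : nat).
Implicit Types (T : table A) (G : seq (node A)) (w : seq (A * nat)).

Lemma npath_letters (P : A -> Prop) t w d :
  wf_node k P t -> npath t w d -> {in map fst w, forall f, P f}.
Proof.
move=> wf_t pt; elim: pt wf_t => {t w d} [//|f ch e t w d e_t _ IH] wf_t.
inversion wf_t as [|f' ch' Pf _ ch_wf]; subst.
move=> g; rewrite in_cons => /predU1P [->//|]; apply: IH.
exact: (ch_wf _ _ e_t).2.
Qed.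

Lemma tpath_letters T G w d : ndtree_for k T G -> tpath G w d -> {subset map fst w <= cols T}.
Proof.
by move=> [_ [G_wf _]] [t [Gt pt]] f /(npath_letters (G_wf t Gt) pt) /InP.
Qed.

Lemma ndtree_separates T G r1 r2 w d :
  ndtree_for k T G -> r1 \in rows T -> r2 \in rows T -> [disjoint r1.2 & r2.2]%fset ->
  tpath G w d -> sat T r1.1 w -> ~ sat T r2.1 w.
Proof.
move=> [_ [_ [_ G_ok]]] r1T r2T /fdisjointP r12 pG s1 s2.
by have /negP := r12 _ (G_ok _ _ _ r1T pG s1); apply; exact: G_ok _ _ _ r2T pG s2.
Qed.

Lemma ndtree_common_decision T G :
  ndtree_for k T G -> (forall w d, tpath G w d -> w = [::]) ->
  exists d, {in rows T, forall r, d \in r.2}.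
Proof.
move=> [_ [_ [G_cover G_ok]]] paths_nil.
case E: (rows T) => [|r0 rs]; first by exists 0.
have r0T : r0 \in rows T by rewrite E mem_head.
have [w [d [pG _]]] := G_cover r0 r0T.
have w_nil := paths_nil _ _ pG.
by exists d => r; rewrite -E => rT; apply: (G_ok _ _ _ rT pG); rewrite w_nil.
Qed.

Lemma const_tree T (psi : seq A -> nat) d : {in rows T, forall r, d \in r.2} ->
  dtree_for k T [:: Term A d] /\ tree_cplx psi [:: Term A d] (psi [::]).
Proof.
move=> Td.
have path_nil w d' : tpath [:: Term A d] w d' -> w = [::] /\ d' = d.
  by case=> t [[<-|[]] pt]; inversion pt.
have p0 : tpath [:: Term A d] [::] d by exists (Term A d); split; [left|constructor].
split; last first.
  split; first by exists [::], d; split.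
  by move=> w d' /path_nil [-> _].
split; last by split=> // t [<-|[]]; constructor.
split; first by discriminate.
split; first by move=> t [<-|[]]; constructor.
split; first by move=> r _; exists [::], d; split=> // p [].
by move=> r w d' /Td ? /path_nil [_ ->].
Qed.

(* Enumerating the complete paths, together with the decidable [satb], lets the
   correctness of a concrete tree be checked by computation. *)
Fixpoint node_paths (t : node A) : seq (seq (A * nat) * nat) :=
  match t with
  | Term d => [:: ([::], d)]
  | Work f ch => flatten [seq [seq ((f, p.1) :: q.1, q.2) | q <- node_paths p.2] | p <- ch]
  end.

Definition tree_paths G := flatten (map node_paths G).

Lemma mem_flatten_map (X : Type) (Y : eqType) (g : X -> seq Y) s x y :
  List.In x s -> y \in g x -> y \in flatten (map g s).
Proof.
elim: s => [//|x' s IH] /= [-> gy|xs gy]; rewrite mem_cat ?gy //.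
by rewrite IH ?orbT.
Qed.

Lemma tpath_paths G w d : tpath G w d -> (w, d) \in tree_paths G.
Proof.
move=> [t [Gt pt]]; apply: mem_flatten_map Gt _.
elim: pt => {t w d} [d|f ch e t w d e_t _ IH] /=; first exact: mem_head.
by apply: (mem_flatten_map e_t); exact: map_f IH.
Qed.

Definition satb T (v : seq nat) w : bool :=
  all (fun p => has (fun i => (List.nth_error (cols T) i == Some p.1) && (nth 0 v i == p.2))
                    (iota 0 (size (cols T)))) w.

Lemma sat_satb T v w : sat T v w -> satb T v w.
Proof.
move=> Tvw; apply/allP => p /InP /Tvw [i [Ei Evi]].
by apply/hasP; exists i; rewrite ?mem_iota ?(nth_error_size Ei) ?Ei ?Evi ?eqxx.
Qed.

Lemma row_decision T v : binary_table T -> exists d, {in rows T, forall r, r.1 = v -> d \in r.2}.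
Proof.
case=> _ _ rows_uniq dec_nonempty.
have [/hasP [r0 r0T /eqP r0v]|/hasPn none] := boolP (has (fun r => r.1 == v) (rows T)).
  have /fset0Pn [d d_r0] := dec_nonempty r0 r0T.
  exists d => r rT rv; suff -> : r = r0 by [].
  by apply: (uniq_map_inj_in rows_uniq) => //; rewrite rv r0v.
by exists 0 => r /none; rewrite /= => /eqP.
Qed.

Lemma one_column_tree T (psi : seq A -> nat) : 1 < k -> binary_table T -> size (cols T) = 1 ->
  exists G, dtree_for k T G /\ tree_cplx psi G (psi (cols T)).
Proof.
move=> k_gt1 binT; have [_ rows_bool _ _] := binT.
case Ecols: (cols T) => [//|f [|//]] _.
have [d0 d0_ok] := row_decision [:: 0] binT.
have [d1 d1_ok] := row_decision [:: 1] binT.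
pose t := Work f [:: (0, Term A d0); (1, Term A d1)].
have paths_t w d : tpath [:: t] w d -> (w, d) \in [:: ([:: (f, 0)], d0); ([:: (f, 1)], d1)].
  exact: tpath_paths.
have row_val r : r \in rows T -> exists2 e, e <= 1 & r.1 = [:: e].
  by move=> /rows_bool [a a_le1 ->]; rewrite Ecols; exists (a f).
have sat_val r e : r \in rows T -> sat T r.1 [:: (f, e)] -> r.1 = [:: e].
  move=> /row_val [e' _ ->] /sat_satb.
  by rewrite /satb Ecols /= eqxx /= orbF andbT => /eqP ->.
exists [:: t]; split; last first.
  split; last by move=> w d /paths_t; rewrite !inE => /orP [] /eqP [-> _].
  exists [:: (f, 0)], d0; split=> //.
  by exists t; split; [left | apply: NPWork; [left | constructor]].
split; last by split=> // _ [<-|[]]; constructor=> // e t' [[_ <-]|[[_ <-]|[]]]; constructor.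
split; first by discriminate.
split.
  move=> _ [<-|[]]; constructor; [by rewrite Ecols; left | by [] | ].
  by move=> e t' [[<- <-]|[[<- <-]|[]]]; split; try constructor; lia.
split.
  move=> r /row_val [e e_le1 Er].
  have [d ed] : exists d, List.In (e, Term A d) [:: (0, Term A d0); (1, Term A d1)].
    by case: e {Er} e_le1 => [|[|//]] _; [exists d0; left | exists d1; right; left].
  exists [:: (f, e)], d; split; first by exists t; split; [left | apply: NPWork ed _; constructor].
  by move=> _ [<-|[]]; exists 0; rewrite Ecols Er.
move=> r w d rT /paths_t; rewrite !inE => /orP [] /eqP [-> ->] /(sat_val _ _ rT).
  exact: d0_ok.
exact: d1_ok.
Qed.

Lemma dtree_long_path T G r1 r2 r3 :
  dtree_for k T G -> binary_table T -> r1 \in rows T -> r2 \in rows T -> r3 \in rows T ->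
  [disjoint r1.2 & r2.2]%fset -> [disjoint r1.2 & r3.2]%fset -> [disjoint r2.2 & r3.2]%fset ->
  exists w d, tpath G w d /\ 1 < size w.
Proof.
move=> [G_nd [G1 _]] [_ rows_bool _ _] r1T r2T r3T d12 d13 d23.
have sep := ndtree_separates G_nd; have [_ [_ [G_cover _]]] := G_nd.
(* Otherwise each row is decided by its 0/1 answer to the root query, and two of the
   three rows give the same answer. *)
apply: NNPP => no_long.
have short w d : tpath G w d -> size w <= 1.
  by move=> pG; rewrite leqNgt; apply/negP => long; apply: no_long; exists w, d.
case: G G1 sep G_cover short {G_nd no_long} => [|[d0|f ch] [|//]] // _ sep G_cover short.
  have [w [d [pG s1]]] := G_cover r1 r1T.
  have w_nil : w = [::] by case: pG => t [[<-|[]] pt]; inversion pt.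
  by apply: (sep _ _ _ _ r1T r2T d12 pG s1); rewrite w_nil.
have query r : r \in rows T ->
    exists2 e, e <= 1 & exists d, tpath [:: Work f ch] [:: (f, e)] d /\ sat T r.1 [:: (f, e)].
  move=> rT; have [w [d [pG sw]]] := G_cover r rT; have := short _ _ pG.
  case: (pG) => t [[<-|[]] pt]; inversion pt as [|f' ch' e t' w' d' _ pt']; subst.
  case: w' {pt} pt' pG sw => [|//] _ pG sw _; exists e; last by exists d.
  have [i [_ /= <-]] := sw _ (or_introl erefl); exact: boolean_row_le1 (rows_bool r rT).
have [e1 e1_le1 [d1 [p1 s1]]] := query r1 r1T.
have [e2 e2_le1 [d2 [p2 s2]]] := query r2 r2T.
have [e3 e3_le1 [d3 [p3 s3]]] := query r3 r3T.
have [E|[E|E]] : e1 = e2 \/ e1 = e3 \/ e2 = e3 by lia.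
- by subst e2; exact: sep _ _ _ _ r1T r2T d12 p1 s1 s2.
- by subst e3; exact: sep _ _ _ _ r1T r3T d13 p1 s1 s3.
- by subst e3; exact: sep _ _ _ _ r2T r3T d23 p2 s2 s3.
Qed.

Lemma psi_a_le_d (psi : seq A -> nat) T a d : psi_a k psi T a -> psi_d k psi T d -> a <= d.
Proof. by move=> [_ a_min] [[G [[G_nd _] G_d]] _]; exact: a_min G_nd G_d. Qed.

Lemma cplx_functional (psi : seq A -> nat) b T m m' :
  cplx k psi b T m -> cplx k psi b T m' -> m = m'.
Proof.
case: b => [/= -> -> //||] /= [[G [G_ok G_m]] m_min] [[G' [G'_ok G'_m']] m'_min];
  by apply/eqP; rewrite eqn_leq (m_min _ _ G'_ok G'_m') (m'_min _ _ G_ok G_m).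
Qed.

End DecisionTrees.

Notation attr := (nat * nat)%type.

Definition in_block (n : nat) (T : table attr) : Prop := {in cols T, forall f, f.1 = n}.

Definition block_class (S : nat -> Prop) (T : table attr) : Prop :=
  binary_table T /\ exists2 n, S n & in_block n T.

Lemma block_class_closed (S : nat -> Prop) : closed_class 2 (fun f => S f.1) (block_class S).
Proof.
split=> [T [binT [n Sn blkT]]|T T' CT]; first by apply: binary_table_in_M binT => f /blkT ->.
elim=> // T1 T2 _ [binT1 [n Sn blkT1]] step; split; first exact: binary_table_step step binT1.
by exists n => // f /(cols_step_sub step) /blkT1.
Qed.

Definition psi (w : seq attr) : nat :=
  match w with [::] => 0 | [:: f] => f.1 | f :: _ => f.1.+1 end.

Definition block_cost (n l : nat) : nat :=
  match l with 0 => 0 | 1 => n | _.+2 => n.+1 end.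

Lemma psi_in_block n w : {in w, forall f : attr, f.1 = n} -> psi w = block_cost n (size w).
Proof. by case: w => [|f [|g w]] //= wn; rewrite wn ?mem_head. Qed.

Section BlockComplexity.
Variables (n : nat) (T : table attr).
Hypothesis blkT : in_block n T.

Lemma tpath_psi G w d : ndtree_for 2 T G -> tpath G w d ->
  psi (map fst w) = block_cost n (size w).
Proof.
move=> G_nd pG; rewrite (@psi_in_block n) ?size_map // => f /(tpath_letters G_nd pG).
exact: blkT.
Qed.

Lemma tree_cplx_in_block G m : ndtree_for 2 T G -> tree_cplx psi G m ->
  m = 0 \/ m = n \/ m = n.+1.
Proof.
move=> G_nd [[w [d [pG <-]]] _]; rewrite (tpath_psi G_nd pG).
by case: (size w) => [|[|]]; auto.
Qed.

Lemma cplx_in_block b m : b <> MI -> cplx 2 psi b T m -> m = 0 \/ m = n \/ m = n.+1.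
Proof.
case: b => //= _ [[G [G_ok G_m]] _]; apply: tree_cplx_in_block G_m.
  exact: G_ok.1.
exact: G_ok.
Qed.

Lemma psi_cols_in_block : 0 < size (cols T) ->
  psi (cols T) = if size (cols T) == 1 then n else n.+1.
Proof. by rewrite (psi_in_block blkT); case: (size _) => [|[|]]. Qed.

Lemma cplx_le_psi_cols b v : binary_table T -> b <> MI -> cplx 2 psi b T v -> v <= psi (cols T).
Proof.
move=> binT b_i v_b; have [cols_gt0 _ _ _] := binT.
have [/eqP one_col|many_cols] := boolP (size (cols T) == 1).
  have [G [G_d G_psi]] := one_column_tree psi (erefl : 1 < 2) binT one_col.
  by case: b b_i v_b => //= _ [_ v_min]; [exact: v_min G_d G_psi | exact: v_min _ _ G_d.1 G_psi].
rewrite psi_cols_in_block // (negbTE many_cols).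
by case: (cplx_in_block b_i v_b) => [->|[->|->]].
Qed.

Lemma psi_d_eq0_of_psi_a_eq0 : 0 < n -> psi_a 2 psi T 0 -> forall m, psi_d 2 psi T m -> m = 0.
Proof.
move=> n_gt0 [[G [G_nd [_ G_le0]]] _] m [_ m_min].
have paths_nil w d : tpath G w d -> w = [::].
  move=> pG; have := G_le0 _ _ pG; rewrite (tpath_psi G_nd pG).
  by case: w {pG} => [|? [|? ?]] //=; lia.
have [d Td] := ndtree_common_decision G_nd paths_nil.
have [G0_d G0_psi] := const_tree 2 psi Td.
by apply/eqP; rewrite -leqn0; exact: m_min G0_d G0_psi.
Qed.

Lemma ndtree_cplx_ge r1 r2 G m :
  r1 \in rows T -> r2 \in rows T -> [disjoint r1.2 & r2.2]%fset ->
  ndtree_for 2 T G -> tree_cplx psi G m -> n <= m.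
Proof.
move=> r1T r2T d12 G_nd [_ G_le]; have [_ [_ [G_cover _]]] := G_nd.
have [w [d [pG s1]]] := G_cover r1 r1T.
have := G_le _ _ pG; rewrite (tpath_psi G_nd pG).
case: w pG s1 => [|? [|? ?]] //= pG s1; last by lia.
by case: (ndtree_separates G_nd r1T r2T d12 pG s1).
Qed.

Lemma dtree_cplx_gt r1 r2 r3 G m : binary_table T ->
  r1 \in rows T -> r2 \in rows T -> r3 \in rows T ->
  [disjoint r1.2 & r2.2]%fset -> [disjoint r1.2 & r3.2]%fset -> [disjoint r2.2 & r3.2]%fset ->
  dtree_for 2 T G -> tree_cplx psi G m -> n < m.
Proof.
move=> binT r1T r2T r3T d12 d13 d23 G_d [_ G_le].
have [w [d [pG long]]] := dtree_long_path G_d binT r1T r2T r3T d12 d13 d23.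
have := G_le _ _ pG; rewrite (tpath_psi G_d.1 pG).
by case: w {pG} long => [|? [|? ?]].
Qed.

End BlockComplexity.

Lemma fset1_neq0 (K : choiceType) (x : K) : [fset x]%fset != fset0.
Proof. by apply/fset0Pn; exists x; rewrite inE. Qed.

Lemma fset1_disjoint (K : choiceType) (x y : K) : x != y -> [disjoint [fset x] & [fset y]]%fset.
Proof. by move=> xy; rewrite fdisjoint1X inE. Qed.

Section WitnessTables.
Variable n : nat.
Local Open Scope fset_scope.

Definition one_row_table : table attr := Table [:: (n, 0)] [:: ([:: 0], [fset 0])].

Definition two_row_table : table attr :=
  Table [:: (n, 0)] [:: ([:: 0], [fset 0]); ([:: 1], [fset 1])].

Definition identity_table : table attr :=
  Table [:: (n, 0); (n, 1); (n, 2)]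
        [:: ([:: 1; 0; 0], [fset 0]); ([:: 0; 1; 0], [fset 1]); ([:: 0; 0; 1], [fset 2])].

Lemma in_block_one_row : in_block n one_row_table.
Proof. by move=> f; rewrite inE => /eqP ->. Qed.

Lemma in_block_two_row : in_block n two_row_table.
Proof. by move=> f; rewrite inE => /eqP ->. Qed.

Lemma in_block_identity : in_block n identity_table.
Proof. by move=> f; rewrite !inE => /or3P [] /eqP ->. Qed.

Lemma binary_one_row : binary_table one_row_table.
Proof.
split=> // r; rewrite inE => /eqP -> /=; last exact: fset1_neq0.
by exists (fun=> 0).
Qed.

Lemma binary_two_row : binary_table two_row_table.
Proof.
split=> // r; rewrite !inE => /orP [] /eqP -> /=; try exact: fset1_neq0.
  by exists (fun=> 0).
by exists (fun=> 1).
Qed.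

Lemma binary_identity : binary_table identity_table.
Proof.
split=> // r; rewrite !inE; last by case/or3P=> /eqP ->; exact: fset1_neq0.
have unit_row j : boolean_row (cols identity_table)
    [seq nat_of_bool (f.2 == j) | f <- cols identity_table].
  by exists (fun f : attr => nat_of_bool (f.2 == j)) => // f; case: (_ == _).
by case/or3P=> /eqP -> /=; [exact: unit_row 0 | exact: unit_row 1 | exact: unit_row 2].
Qed.

Lemma one_row_cplx : psi_d 2 psi one_row_table 0 /\ psi_a 2 psi one_row_table 0.
Proof.
have dec0 : {in rows one_row_table, forall r, 0 \in r.2}.
  by move=> r; rewrite inE => /eqP ->; rewrite /= inE.
have [G_d G_psi] := const_tree 2 psi dec0.
by split; split=> //; exists [:: Term attr 0]; split=> //; case: G_d.
Qed.

Lemma two_row_cplx : psi_d 2 psi two_row_table n /\ psi_a 2 psi two_row_table n.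
Proof.
have [G [G_d G_psi]] := one_column_tree psi (erefl : 1 < 2) binary_two_row erefl.
have lb G' m : ndtree_for 2 two_row_table G' -> tree_cplx psi G' m -> n <= m.
  apply: (@ndtree_cplx_ge _ _ in_block_two_row ([:: 0], [fset 0]) ([:: 1], [fset 1]));
    by rewrite ?inE ?eqxx ?orbT //=; apply: fset1_disjoint.
split; split; first by exists G.
- by move=> G' m [G'_nd _]; exact: lb.
- by exists G; case: G_d.
- exact: lb.
Qed.

Definition guess_tree : seq (node attr) :=
  [:: Work (n, 0) [:: (1, Term attr 0)]; Work (n, 1) [:: (1, Term attr 1)];
      Work (n, 2) [:: (1, Term attr 2)]].

Lemma guess_tree_ok : ndtree_for 2 identity_table guess_tree /\ tree_cplx psi guess_tree n.
Proof.
have guess j : List.In (Work (n, j) [:: (1, Term attr j)]) guess_tree ->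
    tpath guess_tree [:: ((n, j), 1)] j.
  by move=> Gt; eexists; split; [exact: Gt | apply: NPWork; [left | constructor]].
split; last first.
  split; first by exists [:: ((n, 0), 1)], 0; split=> //; apply: guess; left.
  by move=> w d /tpath_paths; rewrite !inE => /or3P [] /eqP [-> _].
split; first by discriminate.
split.
  move=> t [<-|[<-|[<-|[]]]]; constructor=> //=; auto;
    by move=> e t' [[<- <-]|[]]; split=> //; constructor.
split.
  move=> r; rewrite !inE => /or3P [] /eqP ->.
  - by exists [:: ((n, 0), 1)], 0; split; [apply: guess; left | move=> p [<-|[]]; exists 0].
  - by exists [:: ((n, 1), 1)], 1; split; [apply: guess; right; left | move=> p [<-|[]]; exists 1].
  - by exists [:: ((n, 2), 1)], 2; split;
      [apply: guess; right; right; left | move=> p [<-|[]]; exists 2].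
move=> r w d + /tpath_paths + /sat_satb; rewrite !inE => /or3P [] /eqP -> /or3P [] /eqP [-> ->].
all: by rewrite /satb /= !(inj_eq (@Some_inj _)) !xpair_eqE eqxx //= inE.
Qed.

Definition scan_tree : seq (node attr) :=
  [:: Work (n, 0) [:: (1, Term attr 0); (0, Work (n, 1) [:: (1, Term attr 1); (0, Term attr 2)])]].

Lemma scan_tree_ok : dtree_for 2 identity_table scan_tree /\ tree_cplx psi scan_tree n.+1.
Proof.
pose t := Work (n, 1) [:: (1, Term attr 1); (0, Term attr 2)].
have scan w d : npath t w d -> tpath scan_tree (((n, 0), 0) :: w) d.
  by move=> pt; exists (Work (n, 0) [:: (1, Term attr 0); (0, t)]); split;
    [left | apply: NPWork pt; right; left].
have first_row : tpath scan_tree [:: ((n, 0), 1)] 0.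
  by exists (Work (n, 0) [:: (1, Term attr 0); (0, t)]); split;
    [left | apply: NPWork; [left | constructor]].
have second_row : tpath scan_tree [:: ((n, 0), 0); ((n, 1), 1)] 1.
  by apply: scan; apply: NPWork; [left | constructor].
have third_row : tpath scan_tree [:: ((n, 0), 0); ((n, 1), 0)] 2.
  by apply: scan; apply: NPWork; [right; left | constructor].
split; last first.
  split; first by exists [:: ((n, 0), 0); ((n, 1), 1)], 1.
  by move=> w d /tpath_paths; rewrite !inE => /or3P [] /eqP [-> _].
split; last first.
  split=> // _ [<-|[]]; constructor=> //= e t' [[_ <-]|[[_ <-]|[]]]; constructor=> //.
  by move=> e' t'' [[_ <-]|[[_ <-]|[]]]; constructor.
split; first by discriminate.
split.
  move=> _ [<-|[]]; constructor=> //=; auto.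
  move=> e t' [[<- <-]|[[<- <-]|[]]]; split=> //; constructor=> //=; auto.
  by move=> e' t'' [[<- <-]|[[<- <-]|[]]]; split=> //; constructor.
split.
  move=> r; rewrite !inE => /or3P [] /eqP ->.
  - by exists [:: ((n, 0), 1)], 0; split=> // p [<-|[]]; exists 0.
  - by exists [:: ((n, 0), 0); ((n, 1), 1)], 1; split=> // p [<-|[<-|[]]]; [exists 0 | exists 1].
  - by exists [:: ((n, 0), 0); ((n, 1), 0)], 2; split=> // p [<-|[<-|[]]]; [exists 0 | exists 1].
move=> r w d + /tpath_paths + /sat_satb; rewrite !inE => /or3P [] /eqP -> /or3P [] /eqP [-> ->].
all: by rewrite /satb /= !(inj_eq (@Some_inj _)) !xpair_eqE eqxx //= inE.
Qed.

Lemma identity_cplx : psi_d 2 psi identity_table n.+1 /\ psi_a 2 psi identity_table n.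
Proof.
split; split; [exists scan_tree; exact: scan_tree_ok | move=> G m G_d G_m
  | exists guess_tree; exact: guess_tree_ok | move=> G m G_nd G_m].
- apply: (@dtree_cplx_gt _ _ in_block_identity ([:: 1; 0; 0], [fset 0]) ([:: 0; 1; 0], [fset 1])
    ([:: 0; 0; 1], [fset 2])) G_d G_m; try exact: binary_identity;
    by rewrite ?inE ?eqxx ?orbT //=; apply: fset1_disjoint.
- apply: (@ndtree_cplx_ge _ _ in_block_identity ([:: 1; 0; 0], [fset 0]) ([:: 0; 1; 0], [fset 1]))
    G_nd G_m; by rewrite ?inE ?eqxx ?orbT //=; apply: fset1_disjoint.
Qed.

End WitnessTables.

Lemma bounded_max (P : nat -> Prop) B : (exists x, P x) -> (forall x, P x -> x <= B) ->
  exists2 v, P v & forall x, P x -> x <= v.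
Proof.
elim: B => [|B IH] [x0 Px0] le_B.
  by exists 0 => [|x /le_B]; [have := le_B _ Px0; rewrite leqn0 => /eqP <- | lia].
have [PB1|nPB1] := classic (P B.+1); first by exists B.+1.
apply: IH; first by exists x0.
by move=> x Px; have := le_B _ Px; rewrite leq_eqVlt => /predU1P [Ex|//]; rewrite Ex in Px.
Qed.

Lemma gamma_of_fixpoints (g : nat -> nat -> Prop) : inf_set (fun m => g m m) -> has_typ g TGamma.
Proof.
by move=> fix_g; split=> N; have [m [Nm gmm]] := fix_g N; exists m; split=> //; exists m.
Qed.

Lemma inf_set_residue (P : nat -> Prop) k r :
  r < k -> (forall n, 0 < n -> n %% k = r -> P n) -> inf_set P.
Proof.
move=> r_lt Pk N; exists (N.+1 * k + r); split; first by nia.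
by apply: Pk; rewrite ?modnMDl ?modn_small //; nia.
Qed.

Section BlockTypes.
Variable S : nat -> Prop.
Hypotheses (S0 : ~ S 0) (S_inf : inf_set S).

Local Notation Ub := (U 2 (block_class S) psi).
Local Notation Usetb := (Uset 2 (block_class S) psi).

Lemma block_class_one_row n : S n -> block_class S (one_row_table n).
Proof. by split; [exact: binary_one_row | exists n => //; exact: in_block_one_row]. Qed.

Lemma block_class_two_row n : S n -> block_class S (two_row_table n).
Proof. by split; [exact: binary_two_row | exists n => //; exact: in_block_two_row]. Qed.

Lemma block_class_identity n : S n -> block_class S (identity_table n).
Proof. by split; [exact: binary_identity | exists n => //; exact: in_block_identity]. Qed.

Lemma U_gamma_of_dominated b c :
  (forall T v v', block_class S T -> cplx 2 psi b T v -> cplx 2 psi c T v' -> v <= v') ->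
  (forall N, exists T m, [/\ N <= m, block_class S T, cplx 2 psi b T m & cplx 2 psi c T m]) ->
  has_typ (Ub b c) TGamma.
Proof.
move=> b_le_c witness; apply: gamma_of_fixpoints => N.
have [T [m [Nm CT Tb Tc]]] := witness N; exists m; split=> //; split.
  by exists T; split=> //; split=> //; exists m.
by move=> v [T' [CT' [T'v [v' [T'v' v'_le]]]]]; apply: leq_trans (b_le_c _ _ _ CT' T'v T'v') v'_le.
Qed.

Lemma U_i_eps c : c <> MI -> has_typ (Ub MI c) TEps.
Proof.
move=> c_i; exists 0 => m [v [_ v_max]].
have [n [vn Sn]] := S_inf v.+1; have [one_d one_a] := one_row_cplx n.
have : Usetb MI c m n.
  exists (one_row_table n); split; first exact: block_class_one_row.
  by split=> //; exists 0; split=> //; case: c {v_max} c_i.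
by move/v_max; lia.
Qed.

Lemma Uset_da_le m v : Usetb MD MA m v -> v <= m \/ (S m /\ v = m.+1).
Proof.
move=> [T [[binT [n Sn blkT]] [Tv [a [Ta a_le]]]]].
have n_gt0 : 0 < n by case: n Sn {blkT Tv Ta} => // /S0.
have [a0|a_gt0] := posnP a.
  by left; rewrite a0 in Ta; rewrite (psi_d_eq0_of_psi_a_eq0 blkT n_gt0 Ta Tv).
have a_vals : a = 0 \/ a = n \/ a = n.+1 by apply: (cplx_in_block blkT (b := MA)).
have v_vals : v = 0 \/ v = n \/ v = n.+1 by apply: (cplx_in_block blkT (b := MD)).
have [v_le|v_gt] := leqP v m; [by left | right].
have nm : n = m by lia.
by subst n; split=> //; lia.
Qed.

Lemma U_da_defined m : exists v, Ub MD MA m v.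
Proof.
have [n [_ Sn]] := S_inf 0; have [one_d one_a] := one_row_cplx n.
have [||v Uv v_max] := @bounded_max (Usetb MD MA m) m.+1; last by exists v; split.
  exists 0, (one_row_table n); split; first exact: block_class_one_row.
  by split=> //; exists 0.
by move=> x /Uset_da_le; lia.
Qed.

Lemma U_da_in_S m v : S m -> Ub MD MA m v -> v = m.+1.
Proof.
move=> Sm [Uv v_max]; have [id_d id_a] := identity_cplx m.
have : Usetb MD MA m m.+1.
  by exists (identity_table m); split; [exact: block_class_identity | split=> //; exists m].
by move/v_max; case: (Uset_da_le Uv); lia.
Qed.

Lemma U_da_notin_S m v : ~ S m -> Ub MD MA m v -> v <= m.
Proof. by move=> nSm [/Uset_da_le [//|[]]]. Qed.

Lemma U_da_gamma : inf_set (fun m => ~ S m) -> has_typ (Ub MD MA) TGamma.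
Proof.
move=> coinf; split=> N.
  have [m [Nm Sm]] := S_inf N; have [v Uv] := U_da_defined m.
  by exists m; split=> //; exists v; split=> //; rewrite (U_da_in_S Sm Uv).
have [m [Nm nSm]] := coinf N; have [v Uv] := U_da_defined m.
by exists m; split=> //; exists v; split=> //; exact: U_da_notin_S nSm Uv.
Qed.

Lemma U_da_delta : (forall m, 0 < m -> S m) -> has_typ (Ub MD MA) TDelta.
Proof.
move=> S_pos; split=> [N|].
  by have [v Uv] := U_da_defined N; exists N; split=> //; exists v.
exists 1 => m [v [Uv v_le]]; case: (posnP m) => [->//|/S_pos Sm].
by move: v_le; rewrite (U_da_in_S Sm Uv); lia.
Qed.

Lemma U_diag_gamma b : has_typ (Ub b b) TGamma.
Proof.
apply: U_gamma_of_dominated => [T v v' _ Tv Tv'|N]; first by rewrite (cplx_functional Tv Tv').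
have [n [Nn Sn]] := S_inf N; have [id_d id_a] := identity_cplx n.
case: b.
- by exists (one_row_table n), n; split=> //; exact: block_class_one_row.
- by exists (identity_table n), n.+1; split=> //; [lia | exact: block_class_identity].
- by exists (identity_table n), n; split=> //; exact: block_class_identity.
Qed.

Lemma U_ad_gamma : has_typ (Ub MA MD) TGamma.
Proof.
apply: U_gamma_of_dominated => [T v v' _|N]; first exact: psi_a_le_d.
have [n [Nn Sn]] := S_inf N; have [two_d two_a] := two_row_cplx n.
by exists (two_row_table n), n; split=> //; exact: block_class_two_row.
Qed.

Lemma U_i_dominated_gamma b : b <> MI -> has_typ (Ub b MI) TGamma.
Proof.
move=> b_i; apply: U_gamma_of_dominated => [T v v' [binT [n _ blkT]] Tv <-|N].
  exact: (cplx_le_psi_cols blkT binT b_i Tv).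
have [n [Nn Sn]] := S_inf N.
case: b b_i => // _.
- have [id_d _] := identity_cplx n.
  by exists (identity_table n), n.+1; split=> //; [lia | exact: block_class_identity].
- have [_ two_a] := two_row_cplx n.
  by exists (two_row_table n), n; split=> //; exact: block_class_two_row.
Qed.

Lemma block_class_t5 : inf_set (fun m => ~ S m) -> typ_u_is 2 (block_class S) psi t5.
Proof.
move=> coinf [] [] /=.
- exact: U_diag_gamma.
- by apply: U_i_eps.
- by apply: U_i_eps.
- by apply: U_i_dominated_gamma.
- exact: U_diag_gamma.
- exact: U_da_gamma.
- by apply: U_i_dominated_gamma.
- exact: U_ad_gamma.
- exact: U_diag_gamma.
Qed.

End BlockTypes.

Lemma block_class_t6 (S : nat -> Prop) : ~ S 0 -> (forall m, 0 < m -> S m) ->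
  typ_u_is 2 (block_class S) psi t6.
Proof.
move=> S0 S_pos; have S_inf : inf_set S by move=> N; exists N.+1; split=> //; exact: S_pos.
move=> [] [] /=.
- exact: U_diag_gamma.
- by apply: U_i_eps.
- by apply: U_i_eps.
- by apply: U_i_dominated_gamma.
- exact: U_diag_gamma.
- exact: U_da_delta.
- by apply: U_i_dominated_gamma.
- exact: U_ad_gamma.
- exact: U_diag_gamma.
Qed.

Lemma block_class_union (S1 S2 : nat -> Prop) T :
  block_class (fun n => S1 n \/ S2 n) T <-> block_class S1 T \/ block_class S2 T.
Proof.
split=> [[binT [n [S1n|S2n] blkT]]|[[binT [n Sn blkT]]|[binT [n Sn blkT]]]].
- by left; split=> //; exists n.
- by right; split=> //; exists n.
- by split=> //; exists n => //; left.
- by split=> //; exists n => //; right.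
Qed.

Definition t5_pairs_with_union_of_type (t : cm -> cm -> typ) : Prop :=
  exists (A : Type)
     (k1 : nat) (F1 : A -> Prop) (C1 : table A -> Prop) (psi1 : seq A -> nat)
     (k2 : nat) (F2 : A -> Prop) (C2 : table A -> Prop) (psi2 : seq A -> nat)
     (C : table A -> Prop) (psi : seq A -> nat),
     tpair k1 F1 C1 psi1 /\ tpair k2 F2 C2 psi2 /\ compatible F1 F2 psi1 psi2 /\
     is_union k1 F1 C1 psi1 k2 F2 C2 psi2 C psi /\
     typ_u_is k1 C1 psi1 t5 /\ typ_u_is k2 C2 psi2 t5 /\
     typ_u_is (maxn k1 k2) C psi t.

Lemma disjoint_blocks_union (S1 S2 : nat -> Prop) (t : cm -> cm -> typ) :
  (forall n, S1 n -> S2 n -> False) -> (exists n, S1 n) -> (exists n, S2 n) ->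
  typ_u_is 2 (block_class S1) psi t5 -> typ_u_is 2 (block_class S2) psi t5 ->
  typ_u_is 2 (block_class (fun n => S1 n \/ S2 n)) psi t ->
  t5_pairs_with_union_of_type t.
Proof.
move=> S12 [n1 S1n1] [n2 S2n2] typ1 typ2 typ12.
exists attr, 2, (fun f => S1 f.1), (block_class S1), psi,
  2, (fun f => S2 f.1), (block_class S2), psi,
  (block_class (fun n => S1 n \/ S2 n)), psi.
split; first by split=> //; split; [exists (n1, 0) | exact: block_class_closed].
split; first by split=> //; split; [exists (n2, 0) | exact: block_class_closed].
split; first by split=> // f; exact: S12.
split=> //; split.
  by split=> //; split; [exists (n1, 0); left | exact: block_class_closed].
by split=> // T; exact: block_class_union.
Qed.

Lemma t5_pairs_with_union_of_type_t5 : t5_pairs_with_union_of_type t5.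
Proof.
apply: (@disjoint_blocks_union (fun n => 0 < n /\ n %% 4 = 0) (fun n => 0 < n /\ n %% 4 = 2)).
- by move=> n /= [_ ->] [].
- by exists 4.
- by exists 2.
- apply: block_class_t5 => /=; first lia.
    by apply: (@inf_set_residue _ 4 0) => //; lia.
  by apply: (@inf_set_residue _ 4 1) => //; lia.
- apply: block_class_t5 => /=; first lia.
    by apply: (@inf_set_residue _ 4 2) => //; lia.
  by apply: (@inf_set_residue _ 4 1) => //; lia.
- apply: block_class_t5 => /=; first lia.
    by apply: (@inf_set_residue _ 4 2) => //; lia.
  by apply: (@inf_set_residue _ 4 1) => //; lia.
Qed.

Lemma t5_pairs_with_union_of_type_t6 : t5_pairs_with_union_of_type t6.
Proof.
apply: (@disjoint_blocks_union (fun n => 0 < n /\ n %% 2 = 0) (fun n => 0 < n /\ n %% 2 = 1)).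
- by move=> n /= [_ ->] [].
- by exists 2.
- by exists 1.
- apply: block_class_t5 => /=; first lia.
    by apply: (@inf_set_residue _ 2 0) => //; lia.
  by apply: (@inf_set_residue _ 2 1) => //; lia.
- apply: block_class_t5 => /=; first lia.
    by apply: (@inf_set_residue _ 2 1) => //; lia.
  by apply: (@inf_set_residue _ 2 0) => //; lia.
- by apply: block_class_t6 => /=; lia.
Qed.

Theorem proposition6 :
  (exists (A : Type)
     (k1 : nat) (F1 : A -> Prop) (C1 : table A -> Prop) (psi1 : seq A -> nat)
     (k2 : nat) (F2 : A -> Prop) (C2 : table A -> Prop) (psi2 : seq A -> nat)
     (C : table A -> Prop) (psi : seq A -> nat),
     tpair k1 F1 C1 psi1 /\ tpair k2 F2 C2 psi2 /\ compatible F1 F2 psi1 psi2 /\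
     is_union k1 F1 C1 psi1 k2 F2 C2 psi2 C psi /\
     typ_u_is k1 C1 psi1 t5 /\ typ_u_is k2 C2 psi2 t5 /\
     typ_u_is (maxn k1 k2) C psi t5)
  /\
  (exists (A : Type)
     (k1 : nat) (F1 : A -> Prop) (C1 : table A -> Prop) (psi1 : seq A -> nat)
     (k2 : nat) (F2 : A -> Prop) (C2 : table A -> Prop) (psi2 : seq A -> nat)
     (C : table A -> Prop) (psi : seq A -> nat),
     tpair k1 F1 C1 psi1 /\ tpair k2 F2 C2 psi2 /\ compatible F1 F2 psi1 psi2 /\
     is_union k1 F1 C1 psi1 k2 F2 C2 psi2 C psi /\
     typ_u_is k1 C1 psi1 t5 /\ typ_u_is k2 C2 psi2 t5 /\
     typ_u_is (maxn k1 k2) C psi t6).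
Proof. exact: (conj t5_pairs_with_union_of_type_t5 t5_pairs_with_union_of_type_t6). Qed.
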